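(* Consider the following bit commitment protocol: (commit) the committer chooses a bit $b$ and, before splitting into two agents Bob and Brian, shares it between them; (open) Bob and Brian, who cannot communicate with each other during the open phase, independently send Alice bits $x$ and $y$, respectively; (verify) Alice accepts the commitment of $b$ iff $b=x=y$. In the local command model, a dishonest Bob and Brian may prepare any shared resources before the split; in the open phase an external command $b\in\{0,1\}$ is given to Bob only, Bob's behaviour may depend on $b$, while Brian's behaviour is independent of $b$, and the joint distribution of $(x,y)$ given their respective strategies satisfies no-signalling between Bob and Brian. Let $p_b$ denote the probability that Alice accepts (i.e. $x=y=b$) when the command is $b$. Then for every such cheating strategy, $p_0+p_1\le 1$; i.e. the protocol is $\varepsilon$-weakly binding with $\varepsilon=0$ in the local command model.
   Context: A protocol is $\varepsilon$-weakly binding if for all cheating strategies allowed by the model, $p_0+p_1\le 1+\varepsilon$, where $p_b$ is the probability that Alice accepts an opening of $b$. *)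

From mathcomp Require Import all_boot all_order all_algebra.
Set Implicit Arguments. Unset Strict Implicit. Unset Printing Implicit Defensive.
Import Order.TTheory GRing.Theory Num.Theory.
Local Open Scope ring_scope.

(* A cheating strategy in the local command model is described by its
   behaviour: for each external command b (given to Bob only), the joint
   distribution P b x y of Bob's output x and Brian's output y. *)
Definition is_distr (R : realFieldType) (p : bool -> bool -> R) : Prop :=
  (forall x y, 0 <= p x y) /\ \sum_(x : bool) \sum_(y : bool) p x y = 1.

Definition no_signalling_local_command (R : realFieldType)
  (P : bool -> bool -> bool -> R) : Prop :=
  forall y, \sum_(x : bool) P false x y = \sum_(x : bool) P true x y.

Definition local_command_strategy (R : realFieldType)
  (P : bool -> bool -> bool -> R) : Prop :=
  (forall b, is_distr (P b)) /\ no_signalling_local_command P.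

Definition p_accept (R : realFieldType) (P : bool -> bool -> bool -> R)
  (b : bool) : R := P b b b.

Definition weakly_binding (R : realFieldType)
  (strategy : (bool -> bool -> bool -> R) -> Prop) (eps : R) : Prop :=
  forall P, strategy P -> p_accept P false + p_accept P true <= 1 + eps.

From mathcomp Require Import all_boot all_order all_algebra.
Import Order.TTheory GRing.Theory Num.Theory.
Set Implicit Arguments. Unset Strict Implicit. Unset Printing Implicit Defensive.
Local Open Scope ring_scope.

(* Acceptance of 0 needs Brian to output 0, acceptance of 1 needs him to
   output 1. By no-signalling Brian's marginal is the same under both
   commands, so p_0 <= Pr[y = 0] and p_1 <= Pr[y = 1] = 1 - Pr[y = 0]. *)

Definition brian_marginal (R : realFieldType) (p : bool -> bool -> R)
  (y : bool) : R := \sum_(x : bool) p x y.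

Lemma le_brian_marginal (R : realFieldType) (p : bool -> bool -> R) x y :
  is_distr p -> p x y <= brian_marginal p y.
Proof.
move=> [p_ge0 _]; rewrite /brian_marginal (bigD1 x) //= lerDl.
by apply: sumr_ge0 => x' _; apply: p_ge0.
Qed.

Lemma brian_marginal_negb (R : realFieldType) (p : bool -> bool -> R) y :
  is_distr p -> brian_marginal p (~~ y) = 1 - brian_marginal p y.
Proof.
move=> [_ p_sum1]; rewrite -p_sum1 exchange_big big_bool /= /brian_marginal.
by case: y; rewrite /= ?addrK // addrC addrK.
Qed.

Theorem lemma3 (R : realFieldType) :
  weakly_binding (@local_command_strategy R) 0.
Proof.
move=> P [P_distr no_signal]; rewrite /p_accept addr0 -lerBrDr.
have p0_le : P false false false <= brian_marginal (P true) false.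
  by rewrite /brian_marginal -no_signal le_brian_marginal.
apply: (le_trans p0_le).
rewrite -[false]/(~~ true) brian_marginal_negb // lerD2l lerN2.
exact: le_brian_marginal.
Qed.
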